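(* For every finite loopless graph $G$ (multiple edges allowed), $\nu_2(G) \geq \frac{2}{3}\cdot \nu_3(G)$.
   Context: For an integer $k\geq 1$ and a graph $G$, $\nu_k(G)$ denotes the maximum number of edges of a $k$-edge-colorable subgraph of $G$ (a subgraph whose edges can be colored with $k$ colors so that adjacent edges receive different colors). *)

From mathcomp Require Import all_boot.
Set Implicit Arguments. Unset Strict Implicit. Unset Printing Implicit Defensive.

(* A finite multigraph: finite vertex type V, finite edge type E, and an
   endpoint map [ends : E -> V * V].  Parallel edges (distinct edges with the
   same endpoints) are allowed.  Looplessness is a separate hypothesis. *)

Definition loopless (V E : finType) (ends : E -> V * V) : Prop :=
  forall e : E, (ends e).1 != (ends e).2.

Definition share_end (V E : finType) (ends : E -> V * V) (e f : E) : bool :=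
  [|| (ends e).1 == (ends f).1, (ends e).1 == (ends f).2,
      (ends e).2 == (ends f).1 | (ends e).2 == (ends f).2].

Definition adjacent_edges (V E : finType) (ends : E -> V * V) (e f : E) : bool :=
  (e != f) && share_end ends e f.

Definition k_edge_colorable (V E : finType) (ends : E -> V * V) (k : nat)
    (F : {set E}) : bool :=
  [exists c : {ffun E -> 'I_k},
     [forall e in F, forall f in F, adjacent_edges ends e f ==> (c e != c f)]].

Definition nu (V E : finType) (ends : E -> V * V) (k : nat) : nat :=
  \max_(F : {set E} | k_edge_colorable ends k F) #|F|.

From mathcomp Require Import all_boot.
Set Implicit Arguments. Unset Strict Implicit. Unset Printing Implicit Defensive.

(* Take a largest 3-edge-colorable edge set F with a proper coloring.  Deleting
   any one of the three color classes leaves a 2-edge-colorable set, and every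
   edge of F survives exactly two of the three deletions, so the three
   2-colorable sets have 2|F| edges in total; one of them has at least 2|F|/3. *)

Section EdgeColorings.

Variables (V E : finType) (ends : E -> V * V).

Definition proper_edge_coloring (k : nat) (F : {set E}) (c : {ffun E -> 'I_k}) :=
  [forall e in F, forall f in F, adjacent_edges ends e f ==> (c e != c f)].

Lemma leq_card_nu k F : k_edge_colorable ends k F -> #|F| <= nu ends k.
Proof. exact: leq_bigmax_cond. Qed.

Lemma nu_attained k :
  exists F (c : {ffun E -> 'I_k.+1}),
    proper_edge_coloring F c /\ #|F| = nu ends k.+1.
Proof.
have set0_colorable : k_edge_colorable ends k.+1 set0.
  by apply/existsP; exists [ffun=> ord0]; apply/forallP => e; rewrite inE.
have [F F_colorable max_F] := eq_bigmax_cond (fun F : {set E} => #|F|)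
  (introT card_gt0P (ex_intro _ set0 set0_colorable)).
by have /existsP[c c_proper] := F_colorable; exists F, c; split; last exact/esym.
Qed.

Lemma colorable_without_color k (F : {set E}) (c : {ffun E -> 'I_k.+2})
    (i : 'I_k.+2) :
  proper_edge_coloring F c -> k_edge_colorable ends k.+1 [set e in F | c e != i].
Proof.
move=> /forallP c_proper; apply/existsP.
(* [unlift i] renumbers the colors other than [i] injectively into ['I_k.+1]. *)
exists [ffun e => odflt ord0 (unlift i (c e))].
apply/forallP => e; apply/implyP; rewrite inE eq_sym => /andP[eF ice].
apply/forallP => f; apply/implyP; rewrite inE eq_sym => /andP[fF icf].
apply/implyP => adj_ef; rewrite !ffunE.
have /forallP/(_ f) := implyP (c_proper e) eF; rewrite fF adj_ef /=.
apply: contra.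
have [je -> ->] := unlift_some ice; have [jf -> ->] := unlift_some icf.
by move=> /eqP /= ->.
Qed.

Lemma sum_card_without_color n (F : {set E}) (c : E -> 'I_n) :
  \sum_(i < n) #|[set e in F | c e != i]| = n.-1 * #|F|.
Proof.
under eq_bigr => i _ do rewrite -sum1dep_card big_mkcondr /=.
rewrite exchange_big /= -sum1_card big_distrr /=; apply: eq_bigr => e _.
rewrite -big_mkcondr sum1_card muln1 -[in RHS](card_ord n) -(cardC1 (c e)).
by apply: eq_card => i; rewrite !inE eq_sym.
Qed.

End EdgeColorings.

Theorem proposition1 (V E : finType) (ends : E -> V * V) :
  loopless ends -> 2 * nu ends 3 <= 3 * nu ends 2.
Proof.
move=> _; have [F [c [c_proper <-]]] := nu_attained ends 2.
rewrite -(sum_card_without_color F c) -[X in _ <= X * _](card_ord 3) -sum_nat_const.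
apply: leq_sum => i _; apply: leq_card_nu.
exact: colorable_without_color c_proper.
Qed.
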